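(* For every $\rho\ge0$, $x_0\in\mathcal X$, $\gamma\ge0$, the conditional ambiguity set $$\mathcal B_{x_0,\gamma}(\mathbb B^\infty_\rho)=\Big\{\mu_0\in\mathcal M(\mathcal Y):\exists\,\mathbb Q\in\mathbb B^\infty_\rho\text{ with }\mathbb Q(\mathcal N_\gamma(x_0)\times\mathcal Y)>0\text{ and }\mathbb Q(\mathcal N_\gamma(x_0)\times A)=\mu_0(A)\,\mathbb Q(\mathcal N_\gamma(x_0)\times\mathcal Y)\ \forall A\subseteq\mathcal Y\text{ measurable}\Big\}$$ is convex.
   Context: Continuous metrics $\mathbb D_{\mathcal X}$ on $\mathcal X\subseteq\mathbb R^n$ and $\mathbb D_{\mathcal Y}$ on $\mathcal Y\subseteq\mathbb R^m$, $\mathbb D=\mathbb D_{\mathcal X}+\mathbb D_{\mathcal Y}$; data $(\hat x_i,\hat y_i)\in\mathcal X\times\mathcal Y$, $\hat{\mathbb P}=\frac1N\sum_i\delta_{(\hat x_i,\hat y_i)}$; $\mathbb W_\infty(\mathbb Q_1,\mathbb Q_2)=\inf_{\pi\in\Pi(\mathbb Q_1,\mathbb Q_2)}\operatorname{ess\,sup}_\pi\mathbb D(\xi_1,\xi_2)$; $\mathbb B^\infty_\rho=\{\mathbb Q:\mathbb W_\infty(\mathbb Q,\hat{\mathbb P})\le\rho\}$; $\mathcal M(\mathcal Y)$ is the set of Borel probability measures on $\mathcal Y$; $\mathcal N_\gamma(x_0)=\{x\in\mathcal X:\mathbb D_{\mathcal X}(x,x_0)\le\gamma\}$. *)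

From HB Require Import structures.
From mathcomp Require Import all_boot all_order all_algebra.
From mathcomp Require Import all_classical all_reals all_analysis ess_sup_inf.
Set Implicit Arguments. Unset Strict Implicit. Unset Printing Implicit Defensive.
Import Order.TTheory GRing.Theory Num.Theory.
Import numFieldNormedType.Exports.
Local Open Scope classical_set_scope.
Local Open Scope ring_scope.

Definition subtop (T : topologicalType) (S : set T) :=
  initial_topology (@sval T (fun x => x \in S)).

(* the same subspace, pointed at a given element p of S (mathcomp-analysis
   measurable types must be pointed) *)
Definition psub (T : topologicalType) (S : set T) (p : T) (hp : p \in S) :=
  subtop S.
Section psub_instances.
Variables (T : topologicalType) (S : set T) (p : T) (hp : p \in S).
HB.instance Definition _ := Topological.on (psub hp).
HB.instance Definition _ := isPointed.Build (psub hp) (exist _ p hp).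
End psub_instances.

Notation borel_type T := (g_sigma_algebraType (@open T)) (only parsing).

Definition is_metric (T : Type) (R : realType) (D : T -> T -> R) :=
  (forall x y, 0 <= D x y) /\ (forall x y, D x y = 0 <-> x = y) /\
  (forall x y, D x y = D y x) /\ (forall x y z, D x z <= D x y + D y z).

Section generic.
Context {d1 d2 : measure_display} {X : measurableType d1} {Y : measurableType d2}
  {R : realType}.
Local Open Scope ereal_scope.

Definition empirical (N : nat) (data : 'I_N -> X * Y) : set (X * Y) -> \bar R :=
  fun A => ((N%:R)^-1)%:E * \sum_(i < N) \d_(data i) A.

Definition couplings (Q1 Q2 : set (X * Y) -> \bar R) :
  set (probability ((X * Y) * (X * Y))%type R) :=
  [set pi | forall A, measurable A ->
     pi (fst @^-1` A) = Q1 A /\ pi (snd @^-1` A) = Q2 A].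

Definition Winf (D : X * Y -> X * Y -> R) (Q1 Q2 : set (X * Y) -> \bar R)
  : \bar R :=
  ereal_inf [set ess_sup pi (fun p => (D p.1 p.2)%:E) | pi in couplings Q1 Q2].

Definition Winf_ball (D : X * Y -> X * Y -> R) (rho : R)
  (P : set (X * Y) -> \bar R) : set (probability (X * Y)%type R) :=
  [set Q | Winf D Q P <= rho%:E].

Definition nbhd_set (DX : X -> X -> R) (x0 : X) (gamma : R) : set X :=
  [set x | (DX x x0 <= gamma)%R].

Definition cond_ambiguity (DX : X -> X -> R) (x0 : X) (gamma : R)
  (B : set (probability (X * Y)%type R)) : set (probability Y R) :=
  [set mu0 | exists Q, B Q /\
     0 < Q (nbhd_set DX x0 gamma `*` setT) /\
     forall A, measurable A ->
       Q (nbhd_set DX x0 gamma `*` A) = mu0 A * Q (nbhd_set DX x0 gamma `*` setT)].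
End generic.

Definition convex_prob_set {d : measure_display} {T : measurableType d}
  {R : realType} (S : set (probability T R)) :=
  forall (mu0 mu1 nu : probability T R) (lam : R),
    0 <= lam <= 1 -> S mu0 -> S mu1 ->
    (forall A, measurable A ->
       nu A = (lam%:E * mu0 A + (1 - lam)%:E * mu1 A)%E) ->
    S nu.

From HB Require Import structures.
From mathcomp Require Import all_boot all_order all_algebra.
From mathcomp Require Import all_classical all_reals all_analysis ess_sup_inf.
From mathcomp Require Import ring lra.
Set Implicit Arguments. Unset Strict Implicit. Unset Printing Implicit Defensive.
Import Order.TTheory GRing.Theory Num.Theory.
Import numFieldNormedType.Exports.
Local Open Scope classical_set_scope.
Local Open Scope ring_scope.

(* Let mu0 and mu1 be conditional distributions, given the event
   N = N_gamma(x0) x Y, of measures Q0 and Q1 in the Wasserstein ball, with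
   conditioning masses r0 = Q0(N) > 0 and r1 = Q1(N) > 0.  For a mixture
   nu = lam mu0 + (1 - lam) mu1 we exhibit the mixture
   Q = p Q0 + (1 - p) Q1 with the reweighted coefficient
   p = lam r1 / (lam r1 + (1 - lam) r0), whose conditional given N is nu. *)

Section mixture.
Context d (T : measurableType d) (R : realType).
Variables (P Q : probability T R) (p : {i01 R}).
Local Open Scope ereal_scope.

Definition mixture (A : set T) : \bar R :=
  p%:num%:E * P A + (1 - p%:num)%:E * Q A.

Let p_ge0 : (0 <= p%:num)%R. Proof. by []. Qed.
Let q_ge0 : (0 <= 1 - p%:num)%R. Proof. by rewrite subr_ge0. Qed.

Lemma mixtureE (A : set T) :
  mixture A = p%:num%:E * P A + (1 - p%:num)%:E * Q A.
Proof. by []. Qed.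

Let mixture0 : mixture set0 = 0.
Proof. by rewrite /mixture !measure0 !mule0 adde0. Qed.

Let mixture_ge0 (A : set T) : 0 <= mixture A.
Proof. by rewrite /mixture adde_ge0 // mule_ge0 // lee_fin. Qed.

Let mixture_sigma_additive : semi_sigma_additive mixture.
Proof.
rewrite (_ : mixture =
  measure_add (mscale (NngNum p_ge0) P) (mscale (NngNum q_ge0) Q)).
  exact: measure_semi_sigma_additive.
by apply/funext => A; rewrite measure_addE.
Qed.

HB.instance Definition _ :=
  isMeasure.Build _ _ _ mixture mixture0 mixture_ge0 mixture_sigma_additive.

Let mixture_setT : mixture setT = 1.
Proof. by rewrite /mixture !probability_setT !mule1 -EFinD subrKC. Qed.

HB.instance Definition _ := Measure_isProbability.Build _ _ _ mixture mixture_setT.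

Lemma mixture_ae (S : set T) :
  (\forall x \ae P, S x) -> (\forall x \ae Q, S x) -> \forall x \ae mixture, S x.
Proof.
move=> [B0 [mB0 PB0 sB0]] [B1 [mB1 QB1 sB1]].
have mB : measurable (B0 `&` B1) by exact: measurableI.
exists (B0 `&` B1); split => //; last by move=> x Sx; split; [exact: sB0|exact: sB1].
have PB : P (B0 `&` B1) = 0.
  by apply/eqP; rewrite -measure_le0 -PB0 le_measure ?inE.
have QB : Q (B0 `&` B1) = 0.
  by apply/eqP; rewrite -measure_le0 -QB1 le_measure ?inE.
by rewrite /mixture PB QB !mule0 adde0.
Qed.

End mixture.
Arguments mixture {d T R}.

Lemma ess_sup_mixture d (T : measurableType d) (R : realType)
    (P Q : probability T R) (p : {i01 R}) (f : T -> \bar R) (t : \bar R) :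
  (ess_sup P f <= t -> ess_sup Q f <= t -> ess_sup (mixture P Q p) f <= t)%E.
Proof. by move=> /ess_supP hP /ess_supP hQ; apply/ess_supP; exact: mixture_ae. Qed.

Lemma mixture_same {R : realType} (p : {i01 R}) (x : \bar R) :
  (p%:num%:E * x + (1 - p%:num)%:E * x = x)%E.
Proof. by rewrite -ge0_muleDl ?lee_fin ?subr_ge0 // -EFinD subrKC mul1e. Qed.

Section wasserstein_ball.
Context {d1 d2 : measure_display} {X : measurableType d1}
  {Y : measurableType d2} {R : realType}.
Variables (D : X * Y -> X * Y -> R) (P : set (X * Y) -> \bar R).
Local Open Scope ereal_scope.

Lemma couplings_mixture (Q0 Q1 : probability (X * Y)%type R)
    (pi0 pi1 : probability ((X * Y) * (X * Y))%type R) (p : {i01 R}) :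
  couplings Q0 P pi0 -> couplings Q1 P pi1 ->
  couplings (mixture Q0 Q1 p) P (mixture pi0 pi1 p).
Proof.
move=> c0 c1 A mA; have [c0A c0B] := c0 A mA; have [c1A c1B] := c1 A mA.
split; first by rewrite mixtureE -c0A -c1A.
by rewrite -(mixture_same p (P A)) -{1}c0B -{1}c1B.
Qed.

(* type-infinity Wasserstein balls are convex: given couplings of Q0 and Q1
   whose costs are almost surely below rho + e, their mixture is a coupling
   of the mixture with the same almost-sure bound *)
Lemma Winf_ball_mixture (rho : R) (Q0 Q1 : probability (X * Y)%type R)
    (p : {i01 R}) :
  Winf_ball D rho P Q0 -> Winf_ball D rho P Q1 ->
  Winf_ball D rho P (mixture Q0 Q1 p).
Proof.
rewrite /Winf_ball /= => h0 h1; apply/lee_addgt0Pr => e e0.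
have lt_rhoe (Q : probability (X * Y)%type R) :
    Winf D Q P <= rho%:E -> Winf D Q P < (rho + e)%:E.
  by move=> hQ; apply: le_lt_trans hQ _; rewrite lte_fin ltrDl.
have [_ [pi0 c0 <-] l0] := ereal_inf_lt (lt_rhoe _ h0).
have [_ [pi1 c1 <-] l1] := ereal_inf_lt (lt_rhoe _ h1).
apply: le_trans (ereal_inf_lbound _) _.
  by exists (mixture pi0 pi1 p); [exact: couplings_mixture|reflexivity].
by apply: ess_sup_mixture; exact: ltW.
Qed.

End wasserstein_ball.

Section reweighting.
Context {R : realFieldType}.
Variables (lam r0 r1 : R).
Hypotheses (lam01 : 0 <= lam <= 1) (r0_gt0 : 0 < r0) (r1_gt0 : 0 < r1).

(* the reweighted mixing coefficient lam r1 / (lam r1 + (1 - lam) r0) used to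
   mix two measures whose conditioning events have masses r0 and r1 *)
Definition reweight_denom := lam * r1 + (1 - lam) * r0.

Definition reweight := lam * r1 / reweight_denom.

Lemma reweight_denom_gt0 : 0 < reweight_denom.
Proof.
case/andP: lam01 => l0 l1; rewrite /reweight_denom.
have [->|lam_neq0] := eqVneq lam 0; first by rewrite mul0r add0r subr0 mul1r.
rewrite ltr_pwDl ?mulr_ge0 ?subr_ge0 ?(ltW r0_gt0) // mulr_gt0 //.
by rewrite lt0r lam_neq0.
Qed.

Lemma reweight_itv : 0 <= reweight <= 1.
Proof.
have D0 := reweight_denom_gt0; case/andP: lam01 => l0 l1.
rewrite /reweight divr_ge0 ?mulr_ge0 ?(ltW r1_gt0) ?(ltW D0) //=.
by rewrite ler_pdivrMr // mul1r /reweight_denom lerDl mulr_ge0 ?subr_ge0 ?(ltW r0_gt0).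
Qed.

(* mass of the conditioning event under the reweighted mixture *)
Lemma reweight_mass : reweight * r0 + (1 - reweight) * r1 = r0 * r1 / reweight_denom.
Proof.
have := lt0r_neq0 reweight_denom_gt0.
by rewrite /reweight /reweight_denom => D0; field.
Qed.

(* the reweighted mixture conditions to the lam-mixture of the conditionals *)
Lemma reweight_conditional (m0 m1 : R) :
  reweight * (m0 * r0) + (1 - reweight) * (m1 * r1) =
  (lam * m0 + (1 - lam) * m1) * (reweight * r0 + (1 - reweight) * r1).
Proof.
have := lt0r_neq0 reweight_denom_gt0.
by rewrite /reweight /reweight_denom => D0; field.
Qed.
End reweighting.

Section conditional.
Context {d1 d2 : measure_display} {X : measurableType d1}
  {Y : measurableType d2} {R : realType}.
Local Open Scope ereal_scope.

Definition is_conditional (Q : probability (X * Y)%type R) (C : set X)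
    (mu : probability Y R) :=
  0 < Q (C `*` setT) /\
  forall A, measurable A -> Q (C `*` A) = mu A * Q (C `*` setT).

Let probability_fin {d} {T : measurableType d} (M : probability T R) (A : set T) :
  measurable A -> M A = (fine (M A))%:E.
Proof. by move=> mA; rewrite fineK // fin_num_measure. Qed.

Lemma conditional_mixture (C : set X) (Q0 Q1 : probability (X * Y)%type R)
    (mu0 mu1 nu : probability Y R) (lam : R) :
  measurable C -> (0 <= lam <= 1)%R ->
  is_conditional Q0 C mu0 -> is_conditional Q1 C mu1 ->
  (forall A, measurable A -> nu A = lam%:E * mu0 A + (1 - lam)%:E * mu1 A) ->
  exists p : {i01 R}, is_conditional (mixture Q0 Q1 p) C nu.
Proof.
move=> mC lam01 [Q0_gt0 cond0] [Q1_gt0 cond1] nuE.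
have mCY : measurable (C `*` [set: Y]) by exact: measurableX.
set r0 := fine (Q0 (C `*` [set: Y])); set r1 := fine (Q1 (C `*` [set: Y])).
have Q0E : Q0 (C `*` [set: Y]) = r0%:E := probability_fin Q0 mCY.
have Q1E : Q1 (C `*` [set: Y]) = r1%:E := probability_fin Q1 mCY.
rewrite Q0E lte_fin in Q0_gt0; rewrite Q1E lte_fin in Q1_gt0.
have [w0 w1] := andP (reweight_itv lam01 Q0_gt0 Q1_gt0).
exists (Itv01 w0 w1); split.
  rewrite [X in _ < X]mixtureE Q0E Q1E -!EFinM -EFinD lte_fin reweight_mass //.
  by rewrite divr_gt0 ?mulr_gt0 ?reweight_denom_gt0.
move=> A mA; rewrite [X in X = _]mixtureE [X in _ = _ * X]mixtureE.
rewrite cond0 // cond1 // nuE // Q0E Q1E.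
rewrite (probability_fin mu0 mA) (probability_fin mu1 mA).
by rewrite -!EFinM -!EFinD reweight_conditional.
Qed.

End conditional.

Lemma sublevel_measurable (T : ptopologicalType) (R : realType) (f : T -> R)
    (c : R) :
  continuous f -> measurable ([set x | f x <= c] : set (borel_type T)).
Proof.
move=> cf; rewrite -[X in measurable X]setCK; apply: measurableC.
apply: sub_sigma_algebra; apply: closed_openC.
change (closed (f @^-1` [set r | r <= c])).
by move/continuous_closedP : cf; apply; exact: closed_le.
Qed.

Lemma nbhd_set_measurable (T : ptopologicalType) (R : realType)
    (D : T -> T -> R) (x0 : T) (gamma : R) :
  continuous (fun p : T * T => D p.1 p.2) ->
  measurable (nbhd_set (X := borel_type T) D x0 gamma).
Proof.
move=> cD; apply: sublevel_measurable => x.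
exact: (@continuous2_cvg _ _ _ _ (nbhs x) _ id (fun=> x0) D x x0
  (cD (x, x0)) cvg_id (cvg_cst x0)).
Qed.

Theorem lemma5 (R : realType) (n m : nat)
  (Xs : set 'rV[R]_n) (Ys : set 'rV[R]_m)
  (x0 : 'rV[R]_n) (hx0 : x0 \in Xs) (y0 : 'rV[R]_m) (hy0 : y0 \in Ys)
  (DX : psub hx0 -> psub hx0 -> R) (DY : psub hy0 -> psub hy0 -> R)
  (hDX : is_metric DX) (hDY : is_metric DY)
  (cDX : continuous (fun p : psub hx0 * psub hx0 => DX p.1 p.2))
  (cDY : continuous (fun p : psub hy0 * psub hy0 => DY p.1 p.2))
  (N : nat) (data : 'I_N -> (borel_type (psub hx0) * borel_type (psub hy0))%type)
  (rho : R) (gamma : R) :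
  0 <= rho -> 0 <= gamma ->
  convex_prob_set
    (cond_ambiguity (X := borel_type (psub hx0)) (Y := borel_type (psub hy0))
       DX (exist _ x0 hx0) gamma
       (Winf_ball (fun xi1 xi2 : (borel_type (psub hx0) * borel_type (psub hy0))%type =>
                      DX xi1.1 xi2.1 + DY xi1.2 xi2.2) rho
          (empirical data))).
Proof.
move=> _ _ mu0 mu1 nu lam lam01 [Q0 [ball0 cond0]] [Q1 [ball1 cond1]] nuE.
have mN := nbhd_set_measurable (exist _ x0 hx0 : psub hx0) gamma cDX.
have [p condp] := conditional_mixture mN lam01 cond0 cond1 nuE.
by exists (mixture Q0 Q1 p); split; [exact: Winf_ball_mixture|exact: condp].
Qed.
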